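(* Let $q$ be a prime power, $V$ an $n$-dimensional $\mathbb{F}_q$-vector space and $k\ge1$. The simplicial complex $\Delta(V^*,k)$ is a matroid complex.
   Context: Let $\mathcal{L}$ be the set of lines (1-dimensional subspaces) of $V^*$. $\Delta(V^*,k)$ is the simplicial complex on the vertex set $\mathcal{L}\sqcup\cdots\sqcup\mathcal{L}$ ($k$ disjoint copies) whose faces are the sets $(\mathcal{L}\setminus F_1)\sqcup\cdots\sqcup(\mathcal{L}\setminus F_k)$ with $F_1,\dots,F_k\subseteq\mathcal{L}$ such that $F_1\cup\cdots\cup F_k$ linearly spans $V^*$. A matroid complex is a simplicial complex satisfying the exchange property: if $F,G$ are faces with $|F|<|G|$, there is $v\in G\setminus F$ with $F\cup\{v\}$ a face. *)

From HB Require Import structures.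
From mathcomp Require Import all_boot all_order all_algebra all_field.
Set Implicit Arguments. Unset Strict Implicit. Unset Printing Implicit Defensive.
Import GRing.Theory.
Local Open Scope ring_scope.

(* V^* (the dual of an n-dimensional F-vector space) is modelled as 'rV[F]_n. *)

Definition lines (F : finFieldType) (n : nat) : {set {set 'rV[F]_n}} :=
  [set [set c *: v | c : F] | v in [set v : 'rV[F]_n | v != 0]].

Definition spans (F : finFieldType) (n : nat) (U : {set {set 'rV[F]_n}}) : Prop :=
  forall v : 'rV[F]_n, exists c : 'rV[F]_n -> F,
    v = \sum_(w : 'rV[F]_n | [exists l in U, w \in l]) c w *: w.

(* Vertices of Delta(V^*, k): k disjoint copies of the set of lines,
   encoded as pairs (copy index, line). *)
Definition vtx (F : finFieldType) (n k : nat) : finType :=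
  ('I_k * {set 'rV[F]_n})%type.

Definition Delta_face (F : finFieldType) (n k : nat) (S : {set vtx F n k}) : Prop :=
  exists Fs : 'I_k -> {set {set 'rV[F]_n}},
    (forall i, Fs i \subset lines F n) /\
    spans (\bigcup_(i < k) Fs i) /\
    S = [set x : vtx F n k | (x.2 \in lines F n) && (x.2 \notin Fs x.1)].

Definition matroid_complex (T : finType) (face : {set T} -> Prop) : Prop :=
  face set0 /\
  (forall A B : {set T}, face A -> B \subset A -> face B) /\
  (forall A B : {set T}, face A -> face B -> #|A| < #|B| ->
     exists v, v \in B :\: A /\ face (v |: A))%N.

From HB Require Import structures.
From mathcomp Require Import all_boot all_order all_algebra all_field.
From mathcomp Require Import zify.
Set Implicit Arguments. Unset Strict Implicit. Unset Printing Implicit Defensive.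
Import GRing.Theory.
Local Open Scope ring_scope.

(* Label the vertex (i, l) by the line l.  The faces of Delta(V^*, k) are
   then exactly the complements of spanning sets of vertices, i.e. the
   independent sets of the dual of a vector matroid, and the exchange
   property holds for the complements of spanning sets of any family of
   subspaces of dimension <= 1: given such complements A, B with
   |A| < |B|, either some v in B \ A is not a coloop of the complement of A,
   and then v can be added to A, or every v in B \ A is a coloop, which
   bounds the rank of the complement of B by n - |B \ A| + |A \ B| < n. *)

Section Cospanning.
Variables (F : fieldType) (n : nat) (T : finType).
Variables (E : {set T}) (U : T -> 'M[F]_n).
Implicit Types (A B D S X Y Z : {set T}) (v : T).

Definition span_of (Y : {set T}) : 'M[F]_n := (\sum_(x in Y) U x)%MS.

Lemma span_ofS Y Z : Y \subset Z -> (span_of Y <= span_of Z)%MS.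
Proof.
move=> sYZ; apply/sumsmx_subP => x xY.
by apply: (sumsmx_sup x) => //; apply: (subsetP sYZ).
Qed.

Lemma span_ofU Y Z : (span_of (Y :|: Z) <= span_of Y + span_of Z)%MS.
Proof.
apply/sumsmx_subP => x; rewrite inE => /orP[xY|xZ].
  by apply: submx_trans (addsmxSl _ _); apply: (sumsmx_sup x).
by apply: submx_trans (addsmxSr _ _); apply: (sumsmx_sup x).
Qed.

Lemma span_of_setD1 Y v : (span_of Y <= U v + span_of (Y :\ v))%MS.
Proof.
apply/sumsmx_subP => x xY.
have [->|xv] := eqVneq x v; first exact: addsmxSl.
by apply: submx_trans (addsmxSr _ _); apply: (sumsmx_sup x); rewrite ?inE ?xv.
Qed.

Definition coloop (Y : {set T}) (v : T) : bool :=
  ~~ (span_of Y <= span_of (Y :\ v))%MS.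

Lemma coloop_mem Y v : coloop Y v -> v \in Y.
Proof.
apply: contraR => vY; apply/span_ofS/subsetP => x xY.
by rewrite !inE xY andbT; apply: contraNneq vY => <-.
Qed.

Lemma coloopS X Y v : Y \subset X -> v \in Y -> coloop X v -> coloop Y v.
Proof.
move=> sYX vY; apply: contra => sYv.
apply: submx_trans (span_of_setD1 X v) _.
rewrite addsmx_sub submx_refl andbT.
have Uv : (U v <= span_of Y)%MS by apply: (sumsmx_sup v).
by apply: submx_trans (submx_trans Uv sYv) (span_ofS (setSD _ sYX)).
Qed.

Lemma rank_coloop Y v :
  coloop Y v -> (\rank (span_of (Y :\ v)) < \rank (span_of Y))%N.
Proof. by move=> cYv; apply: rank_ltmx; rewrite /ltmx span_ofS ?subsetDl. Qed.

Lemma rank_setD_coloops X D :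
  {in D, forall v, coloop X v} ->
  (\rank (span_of (X :\: D)) + #|D| <= \rank (span_of X))%N.
Proof.
have [m] := ubnP #|D|; elim: m D => // m IH D ltDm colD.
have [->|[v vD]] := set_0Vmem D; first by rewrite setD0 cards0 addn0.
have colD' : {in D :\ v, forall w, coloop X w}.
  by move=> w; rewrite inE => /andP[_ /colD].
have ltD'm : (#|D :\ v| < m)%N by move: ltDm; rewrite (cardsD1 v D) vD.
have IHD := IH _ ltD'm colD'.
have vX : v \in X :\: (D :\ v) by rewrite !inE eqxx /= (coloop_mem (colD v vD)).
have XD : X :\: D = (X :\: (D :\ v)) :\ v.
  by apply/setP => x; rewrite !inE; case: (eqVneq x v) => [->|]; rewrite ?vD.
have := rank_coloop (coloopS (subsetDl _ _) vX (colD v vD)).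
rewrite -XD (cardsD1 v D) vD; lia.
Qed.

Lemma row_full_setD1 X v :
  ~~ coloop X v -> row_full (span_of X) -> row_full (span_of (X :\ v)).
Proof. by rewrite negbK -!sub1mx => sXv /submx_trans; apply. Qed.

Hypothesis rank_U : {in E, forall x, \rank (U x) <= 1}%N.

Lemma rank_span_of_le_card Y : Y \subset E -> (\rank (span_of Y) <= #|Y|)%N.
Proof.
move=> sYE; rewrite -sum1_card /span_of.
elim/big_rec2: _ => [|x r M xY IH]; first by rewrite mxrank0.
apply: leq_trans (mxrank_adds_leqif _ _) _.
by apply: leq_add => //; apply/rank_U/(subsetP sYE).
Qed.

Lemma rank_span_ofU_le Y Z :
  Z \subset E -> (\rank (span_of (Y :|: Z)) <= \rank (span_of Y) + #|Z|)%N.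
Proof.
move=> sZE; apply: leq_trans (mxrankS (span_ofU Y Z)) _.
apply: leq_trans (mxrank_adds_leqif _ _) _.
by rewrite leq_add2l rank_span_of_le_card.
Qed.

Definition cospanning (S : {set T}) : Prop :=
  S \subset E /\ row_full (span_of (E :\: S)).

Lemma cospanning_exchange A B :
  cospanning A -> cospanning B -> (#|A| < #|B|)%N ->
  exists v, v \in B :\: A /\ cospanning (v |: A).
Proof.
move=> [sAE fullA] [sBE fullB] ltAB; set X := E :\: A.
have [/existsP[v /andP[vBA ncol]]|] := boolP [exists v in B :\: A, ~~ coloop X v].
  exists v; split => //; split.
    by rewrite subUset sAE sub1set (subsetP sBE) //; case/setDP: vBA.
  have -> : E :\: (v |: A) = X :\ v by rewrite setDDl setUC.
  exact: row_full_setD1.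
rewrite negb_exists_in => /forall_inP noncolBA.
have colBA : {in B :\: A, forall v, coloop X v}.
  by move=> v /noncolBA; rewrite negbK.
have rank_cut := rank_setD_coloops colBA.
have sEB : E :\: B \subset (X :\: (B :\: A)) :|: (A :\: B).
  apply/subsetP => x; rewrite !inE.
  by case: (x \in A); case: (x \in B); case: (x \in E).
have rank_EB : (\rank (span_of (E :\: B))
                 <= \rank (span_of (X :\: (B :\: A))) + #|A :\: B|)%N.
  apply: leq_trans (mxrankS (span_ofS sEB)) _.
  exact/rank_span_ofU_le/(subset_trans (subsetDl A B) sAE).
have ltAB' : (#|A :\: B| < #|B :\: A|)%N.
  by move: ltAB; rewrite -(cardsID B A) -(cardsID A B) setIC; lia.
move: fullB (rank_leq_col (span_of X)); rewrite /row_full => /eqP; lia.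
Qed.

Hypothesis full_E : row_full (span_of E).

Theorem cospanning_matroid : matroid_complex cospanning.
Proof.
split; [|split]; last exact: cospanning_exchange.
  by split; rewrite ?sub0set ?setD0.
move=> A B [sAE fullA] sBA; split; first exact: subset_trans sBA sAE.
by move: fullA; rewrite -!sub1mx => /submx_trans; apply; apply/span_ofS/setDS.
Qed.

End Cospanning.

Lemma matroid_complex_ext (T : finType) (P Q : {set T} -> Prop) :
  (forall S, P S <-> Q S) -> matroid_complex P -> matroid_complex Q.
Proof.
move=> PQ [P0 [PS Pex]]; split; [|split].
- exact/PQ.
- by move=> A B /PQ PA sBA; apply/PQ/(PS A).
- move=> A B /PQ PA /PQ PB ltAB; have [v [vBA Pv]] := Pex A B PA PB ltAB.
  by exists v; split => //; apply/PQ.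
Qed.

Section Lines.
Variables (F : finFieldType) (n : nat).

Definition rowspan_set (X : {set 'rV[F]_n}) : 'M[F]_n := (\sum_(w in X) <<w>>)%MS.

Lemma spans_row_full (L : {set {set 'rV[F]_n}}) :
  spans L <-> row_full (rowspan_set (cover L)).
Proof.
have memL w : (w \in cover L) = [exists l in L, w \in l].
  apply/bigcupP/existsP => [[l lL wl]|[l /andP[lL wl]]]; exists l => //.
  exact/andP.
rewrite /rowspan_set (eq_bigl _ _ memL); split.
- move=> spL; rewrite -sub1mx; apply/row_subP => i.
  have [c ->] := spL (row i 1%:M).
  apply: summx_sub => w Lw; apply: scalemx_sub.
  by apply: (sumsmx_sup w) => //; rewrite genmxE.
- move=> fullL v; have : (v <= 1%:M)%MS := submx1 v.
  rewrite -sub1mx in fullL; move/submx_trans/(_ fullL).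
  case/sub_sums_genmxP => u ->; exists (fun w => u w 0 0).
  by apply: eq_bigr => w _; rewrite {1}[u w]mx11_scalar mul_scalar_mx.
Qed.

Lemma rowspan_set_bigcup (I : finType) (P : {pred I}) (X : I -> {set 'rV[F]_n}) :
  (rowspan_set (\bigcup_(i in P) X i) :=: \sum_(i in P) rowspan_set (X i))%MS.
Proof.
apply/eqmxP/andP; split; apply/sumsmx_subP.
- move=> w /bigcupP[i Pi wXi].
  by apply: (sumsmx_sup i) => //; apply: (sumsmx_sup w).
- move=> i Pi; apply/sumsmx_subP => w wXi.
  by apply: (sumsmx_sup w) => //; apply/bigcupP; exists i.
Qed.

Lemma spans_imset (I : finType) (Y : {set I}) (f : I -> {set 'rV[F]_n}) :
  spans [set f x | x in Y] <-> row_full (\sum_(x in Y) rowspan_set (f x))%MS.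
Proof.
apply: iff_trans (spans_row_full _) _.
by rewrite cover_imset (eq_row_full (rowspan_set_bigcup _ _)).
Qed.

Lemma rank_rowspan_line l : l \in lines F n -> (\rank (rowspan_set l) <= 1)%N.
Proof.
case/imsetP=> v _ ->; apply: leq_trans (rank_leq_row v).
apply/mxrankS/sumsmx_subP => w /imsetP[c _ ->].
by rewrite genmxE scalemx_sub.
Qed.

Variable k : nat.
Implicit Types (Fs : 'I_k -> {set {set 'rV[F]_n}}) (S : {set vtx F n k}).

Definition line_vertices : {set vtx F n k} := [set x | x.2 \in lines F n].

Definition Delta_set (Fs : 'I_k -> {set {set 'rV[F]_n}}) : {set vtx F n k} :=
  [set x | (x.2 \in lines F n) && (x.2 \notin Fs x.1)].

Lemma imset_snd_Delta_set Fs : (forall i, Fs i \subset lines F n) ->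
  [set x.2 | x in line_vertices :\: Delta_set Fs] = \bigcup_(i < k) Fs i.
Proof.
move=> linesFs; apply/setP => l; apply/imsetP/bigcupP.
- case=> x; rewrite !inE => /andP[+ x2L] ->; rewrite x2L negbK => x2F.
  by exists x.1.
- case=> i _ lFi; exists (i, l) => //.
  by rewrite !inE /= lFi (subsetP (linesFs i)).
Qed.

Lemma Delta_setK S : S \subset line_vertices ->
  Delta_set (fun i => [set l in lines F n | (i, l) \notin S]) = S.
Proof.
move=> sSV; apply/setP => -[i l]; rewrite !inE /=.
have [lS|_] := boolP ((i, l) \in S); rewrite /= ?andbT ?andbN //.
by have := subsetP sSV _ lS; rewrite inE => ->.
Qed.

Lemma Delta_faceE S :
  Delta_face S <-> cospanning line_vertices (fun x => rowspan_set x.2) S.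
Proof.
split.
- move=> [Fs [linesFs [spansFs ->]]]; split.
    by apply/subsetP => x; rewrite !inE => /andP[].
  by apply/spans_imset; rewrite imset_snd_Delta_set.
- move=> [sSV fullS]; set Fs := fun i => [set l in lines F n | (i, l) \notin S].
  have linesFs i : Fs i \subset lines F n by apply/subsetP => l; rewrite inE => /andP[].
  have defS : Delta_set Fs = S := Delta_setK sSV.
  exists Fs; split; [by [] | split; last exact: esym defS].
  by rewrite -imset_snd_Delta_set // defS; apply/spans_imset.
Qed.

Lemma row_full_line_vertices : (0 < k)%N ->
  row_full (\sum_(x in line_vertices) rowspan_set x.2)%MS.
Proof.
move=> k_gt0; rewrite -sub1mx; apply/row_subP => i; set v := row i _.
have [->|v0] := eqVneq v 0; first exact: sub0mx.
have vL : [set c *: v | c : F] \in lines F n by apply/imsetP; exists v; rewrite ?inE.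
apply: (sumsmx_sup (Ordinal k_gt0, [set c *: v | c : F])); first by rewrite inE.
apply: (sumsmx_sup v); last by rewrite genmxE.
by apply/imsetP; exists 1; rewrite ?scale1r.
Qed.

End Lines.

Theorem lemma3p2 (F : finFieldType) (n k : nat) (hk : (1 <= k)%N) :
  matroid_complex (@Delta_face F n k).
Proof.
apply: matroid_complex_ext (fun S => iff_sym (Delta_faceE S)) _.
apply: cospanning_matroid; last exact: row_full_line_vertices.
by move=> x; rewrite inE; apply: rank_rowspan_line.
Qed.
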